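(* Let $A$ be an approximately unital Banach algebra. If $A$ has a left bounded approximate identity (respectively, right bounded approximate identity, two-sided bounded approximate identity) contained in ${\mathfrak r}_A$, then $A$ has a left bounded approximate identity (respectively, right, two-sided) contained in ${\mathfrak F}_A$.
   Context: Banach algebras are complex with submultiplicative norm; ''unital'' means identity of norm 1; approximately unital means having a contractive approximate identity. A left (resp. right, two-sided) bounded approximate identity is a bounded net $(e_t)$ with $e_ta\to a$ (resp. $ae_t\to a$, both) for all $a\in A$. Multiplier unitization $A^1$: $A$ if unital, otherwise $A+\mathbb{C}1$ with $\|a+\lambda1\|=\sup\{\|ac+\lambda c\|:c\in A,\|c\|\le1\}$. ${\mathfrak F}_A=\{a\in A:\|1-a\|_{A^1}\le1\}$; ${\mathfrak r}_A=\{a\in A:\mathrm{Re}\,\varphi(a)\ge0$ for all $\varphi\in(A^1)^*$ with $\|\varphi\|=\varphi(1)=1\}$. *)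

From mathcomp Require Import all_boot all_order all_algebra.
From mathcomp Require Import complex.
From mathcomp Require Import all_classical all_reals all_analysis.
Set Implicit Arguments. Unset Strict Implicit. Unset Printing Implicit Defensive.
Import Order.TTheory GRing.Theory Num.Theory.
Local Open Scope ring_scope.
Local Open Scope classical_set_scope.

Section BanachAlgebra.
Variable R : realType.
Variable V : completeNormedModType R[i].
Variable mul : V -> V -> V.

(* real-valued norm on A (the norm `|x| of a normed R[i]-module lives in R[i]
   and is real; we take its real part) *)
Definition nrm (x : V) : R := complex.Re `|x|.

Definition banach_algebra : Prop :=
  (forall a b c, mul (mul a b) c = mul a (mul b c)) /\
  [/\ (forall a b c, mul (a + b) c = mul a c + mul b c),
      (forall a b c, mul a (b + c) = mul a b + mul a c),
      (forall (k : R[i]) a b, mul (k *: a) b = k *: mul a b),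
      (forall (k : R[i]) a b, mul a (k *: b) = k *: mul a b) &
      (forall a b, nrm (mul a b) <= nrm a * nrm b)].

Definition directed (I : Type) (le : I -> I -> Prop) : Prop :=
  [/\ (exists i : I, True),
      (forall i, le i i),
      (forall i j k, le i j -> le j k -> le i k) &
      (forall i j, exists k, le i k /\ le j k)].

Definition net_cvg (I : Type) (le : I -> I -> Prop) (x : I -> V) (a : V) : Prop :=
  forall eps : R, 0 < eps -> exists t0 : I, forall t, le t0 t -> nrm (x t - a) < eps.

Definition net_bounded (I : Type) (x : I -> V) : Prop :=
  exists M : R, forall t, nrm (x t) <= M.

Definition has_left_bai (S : set V) : Prop :=
  exists (I : Type) (le : I -> I -> Prop) (e : I -> V),
    [/\ directed le, net_bounded e, (forall t, S (e t)) &
        (forall a, net_cvg le (fun t => mul (e t) a) a)].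

Definition has_right_bai (S : set V) : Prop :=
  exists (I : Type) (le : I -> I -> Prop) (e : I -> V),
    [/\ directed le, net_bounded e, (forall t, S (e t)) &
        (forall a, net_cvg le (fun t => mul a (e t)) a)].

Definition has_bai (S : set V) : Prop :=
  exists (I : Type) (le : I -> I -> Prop) (e : I -> V),
    [/\ directed le, net_bounded e, (forall t, S (e t)),
        (forall a, net_cvg le (fun t => mul (e t) a) a) &
        (forall a, net_cvg le (fun t => mul a (e t)) a)].

Definition approx_unital : Prop :=
  exists (I : Type) (le : I -> I -> Prop) (e : I -> V),
    [/\ directed le, (forall t, nrm (e t) <= 1),
        (forall a, net_cvg le (fun t => mul (e t) a) a) &
        (forall a, net_cvg le (fun t => mul a (e t)) a)].

Definition is_unit_of_norm1 (u : V) : Prop :=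
  (forall a, mul u a = a /\ mul a u = a) /\ nrm u = 1.

Definition unital : Prop := exists u : V, is_unit_of_norm1 u.

(* ---------- Multiplier unitization A^1 ----------
   If A is unital (with identity u), A^1 = A and a + l 1 denotes a + l u.
   Otherwise A^1 = A + C 1, whose elements are represented by pairs (a, l),
   with ||a + l 1|| = sup { ||a c + l c|| : c in A, ||c|| <= 1 }. *)

Definition unitization_norm (a : V) (l : R[i]) : R :=
  sup [set nrm (mul a c + l *: c) | c in [set c | nrm c <= 1]].

Definition A1norm (a : V) (l : R[i]) : R :=
  match pselect unital with
  | left h => nrm (a + l *: projT1 (cid h))
  | right _ => unitization_norm a l
  end.

Definition FA : set V := [set a | A1norm (- a) 1 <= 1].

Definition state_unital (u : V) (phi : V -> R[i]) : Prop :=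
  [/\ (forall a b, phi (a + b) = phi a + phi b),
      (forall (k : R[i]) a, phi (k *: a) = k * phi a),
      (exists M : R, forall a, complex.Re `|phi a| <= M * nrm a),
      sup [set complex.Re `|phi a| | a in [set a | nrm a <= 1]] = 1 &
      phi u = 1].

(* states of A^1 = A + C1 in the non-unital case; phi a l = phi(a + l 1) *)
Definition state_nonunital (phi : V -> R[i] -> R[i]) : Prop :=
  [/\ (forall a b l m, phi (a + b) (l + m) = phi a l + phi b m),
      (forall (k : R[i]) a l, phi (k *: a) (k * l) = k * phi a l),
      (exists M : R, forall a l, complex.Re `|phi a l| <= M * unitization_norm a l),
      sup [set complex.Re `|phi x.1 x.2| |
              x in [set x : V * R[i] | unitization_norm x.1 x.2 <= 1]] = 1 &
      phi 0 1 = 1].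

Definition rA : set V :=
  [set a | match pselect unital with
           | left h => forall phi, state_unital (projT1 (cid h)) phi ->
                         0 <= complex.Re (phi a)
           | right _ => forall phi, state_nonunital phi ->
                         0 <= complex.Re (phi a 0)
           end].

End BanachAlgebra.

(* If x lies in r_A and s >= 0, then left and right multiplication by 1 + s x
   do not decrease norms: for a unit vector b with norming functional psi, the
   map a + l 1 |-> psi (a b + l b) is a state of A^1, so Re psi (x b) >= 0 and
   ||b + s x b|| >= Re psi (b + s x b) >= 1.  For ||s x|| <= 1/2 the Neumann
   series inverts 1 + s x in A^1 as 1 + r, and multiplication by 1 + r is then a
   contraction.  Hence the Cesaro means 1 - f_N = (1/N) sum_(k=1..N) (1 + r)^k
   are contractions, i.e. f_N lies in F_A, while the telescoping identity
   s x sum_(k=1..N) (1 + r)^k = 1 - (1 + r)^N gives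
   ||f_N a - a|| <= ||a - x a|| + O(||a|| / N).  Indexing by pairs (t, N) turns
   a bounded approximate identity (e_t) in r_A into one in F_A.  In the unital
   case the identity itself is such a net. *)

From mathcomp Require Import all_boot all_order all_algebra.
From mathcomp Require Import complex.
From mathcomp Require Import all_classical all_reals all_analysis.
From mathcomp Require Import ring lra.
Import Order.TTheory GRing.Theory Num.Theory.
Local Open Scope ring_scope.
Local Open Scope complex_scope.
Local Open Scope classical_set_scope.

Section SublinearHahnBanach.
Variables (R : realType) (V : lmodType R[i]) (p : V -> R).
Hypothesis p_subadditive : forall x y, p (x + y) <= p x + p y.
Hypothesis p_homogeneous : forall (r : R) x, 0 <= r -> p (r%:C *: x) = r * p x.
Variable b : V.

Local Notation rscale r v := ((r : R)%:C *: (v : V)).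

Lemma rscaleA (r1 r2 : R) (v : V) : rscale r1 (rscale r2 v) = rscale (r1 * r2) v.
Proof. by rewrite scalerA rmorphM. Qed.

Lemma rscaleDl (r1 r2 : R) (v : V) : rscale (r1 + r2) v = rscale r1 v + rscale r2 v.
Proof. by rewrite rmorphD scalerDl. Qed.

Lemma sublinear0 : p 0 = 0.
Proof. by have := p_homogeneous 0 0 (le_refl (0 : R)); rewrite scale0r mul0r. Qed.

Lemma sublinear_scale_ge (r : R) x : r * p x <= p (rscale r x).
Proof.
have [r0|r0] := leP 0 r; first by rewrite p_homogeneous.
have := p_subadditive (rscale r x) (rscale (- r) x).
rewrite -rscaleDl subrr scale0r sublinear0 (p_homogeneous (- r)).
  by lra.
by rewrite oppr_ge0 ltW.
Qed.

(* Graphs of real-linear functionals, defined on a real subspace containing [b],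
   dominated by [p] and agreeing with [p] at [b]. *)
Definition dominated_graph (G : set (V * R)) :=
  [/\ forall l : R, G (rscale l b, l * p b),
      forall u s v t (a c : R), G (u, s) -> G (v, t) ->
        G (rscale a u + rscale c v, a * s + c * t) &
      forall u s, G (u, s) -> s <= p u].

Lemma dominated_graph_functional G u s t :
  dominated_graph G -> G (u, s) -> G (u, t) -> s = t.
Proof.
case=> _ Glin Gdom Gs Gt.
have := Gdom _ _ (Glin _ _ _ _ 1 (-1) Gs Gt).
have := Gdom _ _ (Glin _ _ _ _ 1 (-1) Gt Gs).
rewrite !rmorphN1 !rmorph1 !scaleN1r !scale1r !subrr sublinear0 !mul1r !mulN1r.
by rewrite !subr_le0 => ts st; apply/eqP; rewrite eq_le st ts.
Qed.

Lemma dominated_graph_line : dominated_graph [set (rscale l b, l * p b) | l in setT].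
Proof.
split.
- by move=> l; exists l.
- move=> u s v t a c [l1 _ [<- <-]] [l2 _ [<- <-]]; exists (a * l1 + c * l2) => //.
  by rewrite !rscaleA rscaleDl mulrDl !mulrA.
- by move=> u s [l _ [<- <-]]; exact: sublinear_scale_ge.
Qed.

Lemma dominated_graph_chain (F : set (set (V * R))) :
  F `<=` [set G | G = set0 \/ dominated_graph G] -> total_on F subset ->
  \bigcup_(G in F) G = set0 \/ dominated_graph (\bigcup_(G in F) G).
Proof.
move=> FP Ftot.
have Fgraph G : F G -> (exists z, G z) -> dominated_graph G.
  by move=> FG [z Gz]; case: (FP _ FG) => // G0; rewrite G0 in Gz.
have [[G0 FG0 G0z]|Fempty] := pselect (exists2 G, F G & exists z, G z); last first.
  left; apply/seteqP; split => // -[u s] [G FG Gus]; apply: Fempty.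
  by exists G => //; exists (u, s).
right; have [Gline _ _] := Fgraph _ FG0 G0z; split.
- by move=> l; exists G0 => //; exact: Gline.
- move=> u s v t a c [G FG Gus] [H FH Hvt].
  have [GH|HG] := Ftot _ _ FG FH.
    exists H => //; have [_ Hlin _] := Fgraph H FH (ex_intro _ _ Hvt).
    by apply: Hlin => //; exact: GH.
  exists G => //; have [_ Glin _] := Fgraph G FG (ex_intro _ _ Gus).
  by apply: Glin => //; exact: HG.
- by move=> u s [G FG Gus]; have [_ _ Gdom] := Fgraph G FG (ex_intro _ _ Gus); exact: Gdom.
Qed.

Section OneStepExtension.
Variables (G : set (V * R)) (v : V).
Hypothesis hG : dominated_graph G.

(* The admissible values at [v] of an extension form the interval
   [sup_u (s - p (u - v)), inf_w (p (w + v) - t)]. *)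
Lemma extension_value : exists c : R,
  (forall u s, G (u, s) -> s - p (u - v) <= c) /\
  (forall w t, G (w, t) -> c <= p (w + v) - t).
Proof.
have [_ Glin Gdom] := hG.
pose E := [set y | exists u s, G (u, s) /\ y = s - p (u - v)].
have Eub : ubound E (p v).
  move=> _ [u [s [Gus ->]]]; have := Gdom _ _ Gus.
  have := p_subadditive (u - v) v; rewrite subrK; lra.
have E0 : G (0, 0) by have [Gline _ _] := hG; have := Gline 0; rewrite scale0r mul0r.
exists (sup E); split.
  by move=> u s Gus; apply: ub_le_sup; [exists (p v) | exists u, s].
move=> w t Gwt; apply: ge_sup; first by exists (0 - p (0 - v)), 0, 0.
move=> _ [u [s [Gus ->]]].
have := Gdom _ _ (Glin _ _ _ _ 1 1 Gus Gwt); rewrite !scale1r !mul1r.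
have := p_subadditive (u - v) (w + v); rewrite addrA addrAC subrK; lra.
Qed.

Lemma dominated_graph_extend : ~ (exists s, G (v, s)) ->
  exists2 H, G `<` H & dominated_graph H.
Proof.
move=> Gv; have [Gline Glin Gdom] := hG.
have [c [c_lb c_ub]] := extension_value.
have G00 : G (0, 0) by have := Gline 0; rewrite scale0r mul0r.
pose H := [set z | exists u s l, G (u, s) /\ z = (u + rscale l v, s + l * c)].
have GH : G `<=` H by move=> [u s] Gus; exists u, s, 0; rewrite scale0r mul0r !addr0.
exists H.
  split => // HG; apply: Gv; exists c; apply: HG.
  by exists 0, 0, 1; rewrite scale1r mul1r !add0r.
split.
- by move=> l; apply: GH.
- move=> _ _ _ _ a d [u1 [s1 [l1 [Gus1 [-> ->]]]]] [u2 [s2 [l2 [Gus2 [-> ->]]]]].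
  exists (rscale a u1 + rscale d u2), (a * s1 + d * s2), (a * l1 + d * l2).
  split; first exact: Glin.
  congr pair; last by ring.
  rewrite !scalerDr !rscaleA rscaleDl -!addrA; congr (_ + _).
  by rewrite addrC -!addrA; congr (_ + _); rewrite addrC.
- move=> _ _ [u [s [l [Gus [-> ->]]]]].
  have [l0|l0|->] := ltgtP l 0; last by rewrite scale0r mul0r !addr0; exact: Gdom.
  + have m0 : 0 < - l by rewrite oppr_gt0.
    have := c_lb _ _ (Glin _ _ _ _ (- l)^-1 0 Gus G00); rewrite scale0r addr0 mulr0 addr0.
    move=> ineq; have := @p_homogeneous (- l) (rscale (- l)^-1 u - v) (ltW m0).
    rewrite scalerDr rscaleA mulfV ?gt_eqF // scale1r scalerN rmorphN scaleNr opprK.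
    have : - l * ((- l)^-1 * s - p (rscale (- l)^-1 u - v)) <= - l * c by rewrite ler_pM2l.
    rewrite mulrBr mulrA mulfV ?gt_eqF // mul1r mulNr; lra.
  + have := c_ub _ _ (Glin _ _ _ _ l^-1 0 Gus G00); rewrite scale0r addr0 mulr0 addr0.
    move=> ineq; have := @p_homogeneous l (rscale l^-1 u + v) (ltW l0).
    rewrite scalerDr rscaleA mulfV ?gt_eqF // scale1r => ->.
    have : l * c <= l * (p (rscale l^-1 u + v) - l^-1 * s) by rewrite ler_pM2l.
    rewrite mulrBr mulrA mulfV ?gt_eqF // mul1r; lra.
Qed.
End OneStepExtension.

Lemma hahn_banach_sublinear : exists f : V -> R,
  [/\ forall a c u v, f (rscale a u + rscale c v) = a * f u + c * f v,
      forall v, f v <= p v & f b = p b].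
Proof.
have [G [PG Gmax]] := Zorn_bigcup dominated_graph_chain.
have hG : dominated_graph G.
  case: PG => // G0; exfalso; apply: (Gmax _ _ (or_intror dominated_graph_line)).
  by rewrite G0; split => // /(_ (rscale 0 b, 0 * p b)); apply => //; exists 0.
have Gtotal v : exists s, G (v, s).
  apply: contrapT => Gv; have [H GH hH] := @dominated_graph_extend G v hG Gv.
  exact: Gmax GH (or_intror hH).
have [f Gf] := choice Gtotal.
have Gf_eq u s : G (u, s) -> f u = s.
  by move=> Gus; exact: dominated_graph_functional hG (Gf u) Gus.
have [Gline Glin Gdom] := hG.
exists f; split => [a c u v|v|]; first exact/Gf_eq/Glin.
  exact: Gdom.
by apply: Gf_eq; have := Gline 1; rewrite scale1r mul1r.
Qed.

End SublinearHahnBanach.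

Section ComplexNorm.
Context {R : realType}.

Lemma Re_norm_ge0 (z : R[i]) : 0 <= complex.Re `|z|.
Proof. by rewrite normc_def /= sqrtr_ge0. Qed.

Lemma Re_le_Re_norm (z : R[i]) : complex.Re z <= complex.Re `|z|.
Proof.
rewrite normc_def /=; apply: le_trans (ler_norm _) _.
by rewrite -sqrtr_sqr ler_wsqrtr // lerDl sqr_ge0.
Qed.

Lemma Re_norm_real (r : R) : complex.Re `|r%:C| = `|r|.
Proof. by rewrite normc_def /= expr0n /= addr0 sqrtr_sqr. Qed.

Lemma eq1_Re_norm_le1 (z : R[i]) : complex.Re `|z| <= 1 -> complex.Re z = 1 -> z = 1.
Proof.
rewrite normc_def; case: z => a c /= + a1; rewrite {}a1 expr1n -(sqrtr1 R).
rewrite ler_sqrt ?sqrtr1 // => c2.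
have /eqP : c ^+ 2 = 0 by apply/eqP; rewrite eq_le sqr_ge0 andbT; lra.
by rewrite expf_eq0 /= => /eqP ->.
Qed.

End ComplexNorm.

Section NormedSpace.
Context {R : realType} {V : completeNormedModType R[i]}.
Local Notation nrm := (@nrm R V).

Lemma normE (x : V) : `|x| = (nrm x)%:C.
Proof. by rewrite /nrm [LHS]complexE (ger0_Im (normr_ge0 x)) mulr0 addr0. Qed.

Lemma nrm_ge0 (x : V) : 0 <= nrm x.
Proof. by have := normr_ge0 x; rewrite normE lecR. Qed.

Lemma nrmD (x y : V) : nrm (x + y) <= nrm x + nrm y.
Proof. by have := ler_normD x y; rewrite !normE -rmorphD lecR. Qed.

Lemma nrmN (x : V) : nrm (- x) = nrm x.
Proof. by rewrite /nrm normrN. Qed.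

Lemma nrmB (x y : V) : nrm (x - y) = nrm (y - x).
Proof. by rewrite -nrmN opprB. Qed.

Lemma nrm0 : nrm 0 = 0.
Proof. by rewrite /nrm normr0. Qed.

Lemma nrm_eq0 (x : V) : nrm x = 0 -> x = 0.
Proof. by move=> x0; apply/eqP; rewrite -normr_eq0 normE x0. Qed.

Lemma nrmZ (k : R[i]) (x : V) : nrm (k *: x) = complex.Re `|k| * nrm x.
Proof. by rewrite /nrm normrZ normE; case: `|k| => a c /=; rewrite mulr0 subr0. Qed.

Lemma nrmZr (r : R) (x : V) : nrm (r%:C *: x) = `|r| * nrm x.
Proof. by rewrite nrmZ Re_norm_real. Qed.

Lemma nrm_le_eps0 (x : V) : (forall eps, 0 < eps -> nrm x <= eps) -> x = 0.
Proof.
move=> small; apply: nrm_eq0; apply/eqP; rewrite eq_le nrm_ge0 andbT.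
by apply/ler_addgt0Pr => eps /small; rewrite add0r.
Qed.

Lemma nrm_normalize {c : V} : c != 0 -> exists2 b : V, nrm b = 1 & c = (nrm c)%:C *: b.
Proof.
move=> c0; have nc0 : nrm c != 0 by apply: contraNneq c0 => /nrm_eq0 ->.
exists ((nrm c)^-1%:C *: c).
  by rewrite nrmZr ger0_norm ?invr_ge0 ?nrm_ge0 // mulVf.
by rewrite scalerA -rmorphM mulfV // scale1r.
Qed.

Definition is_norming (psi : V -> R[i]) (b : V) :=
  [/\ forall x y, psi (x + y) = psi x + psi y,
      forall k x, psi (k *: x) = k * psi x,
      forall x, complex.Re `|psi x| <= nrm x & complex.Re (psi b) = nrm b].

Lemma norming_functional (b : V) : exists psi, is_norming psi b.
Proof.
have nrm_hom (r : R) x : 0 <= r -> nrm (r%:C *: x) = r * nrm x.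
  by move=> r0; rewrite nrmZr ger0_norm.
have [f [flin fle fb]] := @hahn_banach_sublinear _ _ nrm nrmD nrm_hom b.
have fD x y : f (x + y) = f x + f y by have := flin 1 1 x y; rewrite !scale1r !mul1r.
have fZ (a : R) x : f (a%:C *: x) = a * f x.
  by have := flin a 0 x x; rewrite scale0r addr0 mul0r addr0.
(* the complexification of the real functional [f] *)
pose psi x := f x +i* (- f ('i *: x)).
have psiD x y : psi (x + y) = psi x + psi y.
  by rewrite /psi scalerDr !fD; apply/eqP; rewrite eq_complex /= opprD !eqxx.
have psiZ k x : psi (k *: x) = k * psi x.
  have ii y : 'i *: ('i *: y) = - y :> V by rewrite scalerA -expr2 sqr_i scaleN1r.
  have decomp (a c : R) y : (a +i* c) *: y = a%:C *: y + c%:C *: ('i *: y).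
    rewrite scalerA -scalerDl; congr (_ *: _); apply/eqP.
    by rewrite eq_complex /= !mulr0 !mul0r !subr0 !mulr1 !addr0 add0r !eqxx.
  case: k => a c; rewrite /psi decomp scalerDr !(scalerA 'i) !(mulrC 'i) -!scalerA.
  rewrite ii scalerN -scaleNr -rmorphN !fD !fZ; apply/eqP; rewrite eq_complex /=.
  by apply/andP; split; apply/eqP; ring.
exists psi; split => // x.
have [->|psix0] := eqVneq (psi x) 0; first by rewrite normr0 /= nrm_ge0.
(* rotate [x] so that [psi] takes a nonnegative real value on it *)
pose w := `|psi x| / psi x.
have w1 : complex.Re `|w| = 1 by rewrite /w normrM normfV normr_id mulfV ?normr_eq0.
have <- : complex.Re (psi (w *: x)) = complex.Re `|psi x| by rewrite psiZ mulfVK.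
by apply: le_trans (fle _) _; rewrite nrmZ w1 mul1r.
Qed.

End NormedSpace.

Lemma cauchy_seq_cvg (R : realType) (V : completeNormedModType R[i]) (u : nat -> V) :
  (forall eps : R, 0 < eps -> exists N, forall m n, (N <= m)%N -> (N <= n)%N ->
     nrm (u m - u n) < eps) ->
  exists l, forall eps : R, 0 < eps -> exists N, forall n, (N <= n)%N -> nrm (u n - l) < eps.
Proof.
move=> u_cauchy.
have : cvg (u @ \oo).
  apply/cauchy_cvgP; apply: cauchy_exP => eps.
  case: eps => e e' /=; rewrite ltcE /= => /andP[/eqP -> e0].
  have [N uN] := u_cauchy _ e0; exists (u N); exists N => // n /= Nn.
  by rewrite -ball_normE /= normE ltcR; exact: uN.
move=> /cvg_ex [l /cvgrPdist_lt ul]; exists l => eps e0.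
have [N _ uN] := ul eps%:C (eqbRL (ltcR _ _) e0).
by exists N => n Nn; have := uN n Nn; rewrite normE ltcR nrmB.
Qed.

Definition mulrev {T : Type} (mul : T -> T -> T) a b := mul b a.

Section BanachAlgebra.
Context {R : realType} {V : completeNormedModType R[i]} {mul : V -> V -> V}.
Hypothesis hBA : banach_algebra mul.
Local Notation nrm := (@nrm R V).
Local Notation unorm := (unitization_norm mul).

Lemma bmulA a b c : mul (mul a b) c = mul a (mul b c).
Proof. by case: hBA. Qed.
Lemma bmulDl a b c : mul (a + b) c = mul a c + mul b c.
Proof. by case: hBA => _ []. Qed.
Lemma bmulDr a b c : mul a (b + c) = mul a b + mul a c.
Proof. by case: hBA => _ []. Qed.
Lemma bmulZl k a b : mul (k *: a) b = k *: mul a b.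
Proof. by case: hBA => _ []. Qed.
Lemma bmulZr k a b : mul a (k *: b) = k *: mul a b.
Proof. by case: hBA => _ []. Qed.
Lemma nrm_mul a b : nrm (mul a b) <= nrm a * nrm b.
Proof. by case: hBA => _ []. Qed.
Lemma bmul0l a : mul 0 a = 0.
Proof. by have := bmulZl 0 0 a; rewrite !scale0r. Qed.
Lemma bmul0r a : mul a 0 = 0.
Proof. by have := bmulZr 0 a 0; rewrite !scale0r. Qed.
Lemma bmulNl a b : mul (- a) b = - mul a b.
Proof. by rewrite -scaleN1r bmulZl scaleN1r. Qed.
Lemma bmulNr a b : mul a (- b) = - mul a b.
Proof. by rewrite -scaleN1r bmulZr scaleN1r. Qed.
Lemma bmulBl a b c : mul (a - b) c = mul a c - mul b c.
Proof. by rewrite bmulDl bmulNl. Qed.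
Lemma bmulBr a b c : mul a (b - c) = mul a b - mul a c.
Proof. by rewrite bmulDr bmulNr. Qed.

Lemma banach_algebra_rev : banach_algebra (mulrev mul).
Proof.
split; first by move=> a b c; rewrite /mulrev bmulA.
split=> *; rewrite /mulrev ?bmulDl ?bmulDr ?bmulZl ?bmulZr // mulrC; exact: nrm_mul.
Qed.

Lemma unitization_norm_ge a l c : nrm c <= 1 -> nrm (mul a c + l *: c) <= unorm a l.
Proof.
move=> c1; apply: ub_le_sup; last by exists c.
exists (nrm a + complex.Re `|l|) => _ [c' c'1 <-].
apply: le_trans (nrmD _ _) _; rewrite nrmZ; apply: lerD.
  apply: le_trans (nrm_mul _ _) _; rewrite ler_piMr ?nrm_ge0 //.
by rewrite ler_piMr ?Re_norm_ge0.
Qed.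

Lemma unitization_norm_le a l M :
  (forall c, nrm c <= 1 -> nrm (mul a c + l *: c) <= M) -> unorm a l <= M.
Proof.
move=> bound; apply: ge_sup; last by move=> _ [c c1 <-]; exact: bound.
by exists (nrm (mul a 0 + l *: 0)); exists 0; rewrite //= nrm0 ler01.
Qed.

Lemma unitization_norm01 : unorm 0 1 <= 1.
Proof. by apply: unitization_norm_le => c c1; rewrite bmul0l add0r scale1r. Qed.

Lemma state_nonunital_of_norming (b : V) (psi : V -> R[i]) (g : V -> R[i] -> V) :
  nrm b = 1 -> is_norming psi b ->
  (forall a a' l m, g (a + a') (l + m) = g a l + g a' m) ->
  (forall k a l, g (k *: a) (k * l) = k *: g a l) ->
  (forall a l, nrm (g a l) <= unorm a l) ->
  g 0 1 = b ->
  state_nonunital mul (fun a l => psi (g a l)).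
Proof.
move=> b1 [psiD psiZ psi_le]; rewrite b1 => psib gD gZ g_le g01.
have psi_g_le a l : complex.Re `|psi (g a l)| <= unorm a l.
  exact: le_trans (psi_le _) (g_le a l).
have psib1 : psi b = 1.
  by apply: eq1_Re_norm_le1 => //; rewrite -g01; apply: le_trans (psi_g_le 0 1) _;
     exact: unitization_norm01.
have ub : ubound [set complex.Re `|psi (g x.1 x.2)| |
                  x in [set x : V * R[i] | unorm x.1 x.2 <= 1]] 1.
  by move=> _ [[a l] /= al1 <-]; exact: le_trans (psi_g_le a l) al1.
split.
- by move=> a a' l m; rewrite gD psiD.
- by move=> k a l; rewrite gZ psiZ.
- by exists 1 => a l; rewrite mul1r.
- apply/eqP; rewrite eq_le ge_sup //; last first.
    by exists (complex.Re `|psi (g 0 1)|); exists (0, 1); first exact: unitization_norm01.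
  apply: ub_le_sup; first by exists 1.
  exists (0, 1); first exact: unitization_norm01.
  change (complex.Re `|psi (g 0 1)| = 1).
  by rewrite g01 psib1 normr1.
- by rewrite /= g01.
Qed.

Lemma expansive_of_accretive (h : V -> V) (s : R) c : 0 <= s ->
  (forall k x, h (k *: x) = k *: h x) ->
  (forall b psi, nrm b = 1 -> is_norming psi b -> 0 <= complex.Re (psi (h b))) ->
  nrm c <= nrm (c + s%:C *: h c).
Proof.
move=> s0 hZ accretive; have [->|c0] := eqVneq c 0; first by rewrite nrm0 nrm_ge0.
have [b b1 ->] := nrm_normalize c0; set n := nrm c.
have [psi psi_norming] := norming_functional b.
have psihb := accretive b psi b1 psi_norming.
have [psiD psiZ psi_le] := psi_norming; rewrite b1 => psib.
have b_le : 1 <= nrm (b + s%:C *: h b).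
  apply: le_trans (le_trans (Re_le_Re_norm _) (psi_le _)); rewrite psiD psiZ.
  move: psib psihb; case: (psi b) => p1 p2; case: (psi (h b)) => q1 q2 /= -> q10.
  by rewrite mul0r subr0 lerDl mulr_ge0.
rewrite hZ scalerA mulrC -scalerA -scalerDr !nrmZr b1 mulr1.
by rewrite ler_peMr ?normr_ge0.
Qed.

Lemma rA_state_nonunital {x} : ~ unital mul -> rA mul x ->
  forall phi, state_nonunital mul phi -> 0 <= complex.Re (phi x 0).
Proof. by rewrite /rA /=; case: pselect. Qed.

Lemma rA_expansive_left {x s} : ~ unital mul -> rA mul x -> 0 <= s ->
  forall c, nrm c <= nrm (c + s%:C *: mul x c).
Proof.
move=> nu xrA s0 c.
apply: (expansive_of_accretive (mul x)) => // [k y|b psi b1 psi_norming].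
  exact: bmulZr.
have := rA_state_nonunital nu xrA _
  (state_nonunital_of_norming b psi (fun a l => mul a b + l *: b) b1 psi_norming _ _ _ _).
rewrite /= scale0r addr0; apply.
- by move=> a a' l m; rewrite bmulDl scalerDl addrACA.
- by move=> k a l; rewrite bmulZl scalerDr scalerA.
- by move=> a l; apply: unitization_norm_ge; rewrite b1.
- by rewrite bmul0l add0r scale1r.
Qed.

Lemma half_pow_small (d : R) {eps : R} : 0 < eps -> exists N : nat, d * (2^-1) ^+ N < eps.
Proof.
move=> eps0; have [d0|d0] := leP d 0; first by exists 0%N; rewrite expr0 mulr1; lra.
exists (Num.Def.archi_bound (d / eps)).
have := upper_nthrootP (leqnn (Num.Def.archi_bound (d / eps))).
by rewrite exprVn ltr_pdivrMr ?exprn_gt0 // ltr_pdivrMr // mulrC.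
Qed.

Section QuasiInverse.
Variable y : V.
Hypothesis y_small : nrm y <= 2^-1.

(* partial sums of [- y + y^2 - y^3 + ...] *)
Fixpoint neumann n := if n is n'.+1 then - y - mul y (neumann n') else - y.

Lemma neumann_comm n : mul y (neumann n) = mul (neumann n) y.
Proof.
elim: n => [|n IH] /=; first by rewrite bmulNr bmulNl.
by rewrite bmulBr bmulBl bmulNr bmulNl bmulA IH.
Qed.

Lemma neumann_diff n :
  nrm (neumann n.+1 - neumann n) <= (2^-1) ^+ n * nrm (neumann 1 - neumann 0).
Proof.
elim: n => [|n IH]; first by rewrite expr0 mul1r.
have -> : neumann n.+2 - neumann n.+1 = - mul y (neumann n.+1 - neumann n).
  by rewrite bmulBr /= opprD addrACA subrr add0r opprK opprB addrC.
rewrite nrmN exprS -mulrA; apply: le_trans (nrm_mul _ _) _.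
by apply: ler_pM => //; exact: nrm_ge0.
Qed.

Lemma neumann_cauchy {n m} : (n <= m)%N ->
  nrm (neumann m - neumann n) <= 2 * nrm (neumann 1 - neumann 0) * (2^-1) ^+ n.
Proof.
move=> /subnKC <-; set d := nrm (neumann 1 - neumann 0); have d0 : 0 <= d := nrm_ge0 _.
suff : nrm (neumann (n + (m - n)) - neumann n) <=
         2 * d * (2^-1) ^+ n - 2 * d * (2^-1) ^+ (n + (m - n)).
  by move/le_trans; apply; rewrite gerBl mulr_ge0 ?exprn_ge0 // mulr_ge0.
elim: (m - n)%N => [|k IH]; first by rewrite addn0 !subrr nrm0.
rewrite addnS -(subrKA (neumann (n + k))) addrC.
apply: le_trans (nrmD _ _) _; move: IH (neumann_diff (n + k)).
rewrite -/d exprS; set q := (2^-1) ^+ (n + k).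
have : 0 <= q * d by rewrite mulr_ge0 ?exprn_ge0.
have -> : 2 * d * (2^-1 * q) = q * d by field.
lra.
Qed.

Lemma quasi_inverse : exists r, r + y + mul y r = 0 /\ r + y + mul r y = 0.
Proof.
have [r neumann_r] : exists r, forall eps : R, 0 < eps ->
    exists N, forall n, (N <= n)%N -> nrm (neumann n - r) < eps.
  apply: cauchy_seq_cvg => eps eps0.
  have [N smallN] :=
    half_pow_small (2 * nrm (neumann 1 - neumann 0)) (divr_gt0 eps0 (ltr0n _ 2)).
  exists N => m n Nm Nn; rewrite -(subrKA (neumann N)) -opprB.
  apply: le_lt_trans (nrmD _ _) _; rewrite nrmN !(nrmB (neumann N)).
  have := neumann_cauchy Nm; have := neumann_cauchy Nn; lra.
have y1 : nrm y <= 1 by apply: le_trans y_small _; rewrite invf_le1 // ler1n.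
exists r; split; apply: nrm_le_eps0 => eps eps0;
  have [N closeN] := neumann_r _ (divr_gt0 eps0 (ltr0n _ 2));
  have := closeN N.+1 (leqnSn N); have := closeN N (leqnn N); rewrite nrmB (nrmB (neumann N.+1)).
- have -> : r + y + mul y r = (r - neumann N.+1) + mul y (r - neumann N).
    rewrite bmulBr /= opprB opprK -!addrA; congr (r + _).
    by rewrite addrCA (addrCA (mul y (neumann N))) subrr addr0.
  move=> h1 h2; apply: le_trans (nrmD _ _) _; have := nrm_mul y (r - neumann N).
  have := nrm_ge0 (r - neumann N); nra.
- have -> : r + y + mul r y = (r - neumann N.+1) + mul (r - neumann N) y.
    rewrite bmulBl /= neumann_comm opprB opprK -!addrA; congr (r + _).
    by rewrite addrCA (addrCA (mul (neumann N) y)) subrr addr0.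
  move=> h1 h2; apply: le_trans (nrmD _ _) _; have := nrm_mul (r - neumann N) y.
  have := nrm_ge0 (r - neumann N); have := nrm_ge0 y; nra.
Qed.

End QuasiInverse.

Hypothesis hau : approx_unital mul.

Lemma nrm_le_of_mul_ball z M :
  (forall c, nrm c <= 1 -> nrm (mul z c) <= M) -> nrm z <= M.
Proof.
move=> bound; have [I [le [e [[[t _] le_refl _ _] e1 _ e_right]]]] := hau.
apply/ler_addgt0Pr => eps /(e_right z) [t0 ht0].
have := nrmD (z - mul z (e t0)) (mul z (e t0)); rewrite subrK nrmB.
have := ht0 t0 (le_refl t0); have := bound _ (e1 t0); lra.
Qed.

Lemma nrm_mul_unitization b a l : nrm (mul b a + l *: b) <= nrm b * unorm a l.
Proof.
apply: nrm_le_of_mul_ball => c c1.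
rewrite bmulDl bmulA bmulZl -bmulZr -bmulDr.
apply: le_trans (nrm_mul _ _) _; rewrite ler_wpM2l ?nrm_ge0 //.
exact: unitization_norm_ge.
Qed.

Lemma rA_expansive_right {x s} : ~ unital mul -> rA mul x -> 0 <= s ->
  forall c, nrm c <= nrm (c + s%:C *: mul c x).
Proof.
move=> nu xrA s0 c.
apply: (expansive_of_accretive (fun c => mul c x)) => // [k y|b psi b1 psi_norming].
  exact: bmulZl.
have := rA_state_nonunital nu xrA _
  (state_nonunital_of_norming b psi (fun a l => mul b a + l *: b) b1 psi_norming _ _ _ _).
rewrite /= scale0r addr0; apply.
- by move=> a a' l m; rewrite bmulDr scalerDl addrACA.
- by move=> k a l; rewrite bmulZr scalerDr scalerA.
- by move=> a l; have := nrm_mul_unitization b a l; rewrite b1 mul1r.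
- by rewrite bmul0r add0r scale1r.
Qed.

End BanachAlgebra.

Section CesaroMeans.
Context {R : realType} {V : completeNormedModType R[i]}.
Variable mul : V -> V -> V.
Hypothesis hBA : banach_algebra mul.
Local Notation nrm := (@nrm R V).
Variables (x r : V) (s : R).
Local Notation y := (s%:C *: x).
Hypothesis s_gt0 : 0 < s.
Hypothesis r_quasi_left : r + y + mul y r = 0.
Hypothesis r_quasi_right : r + y + mul r y = 0.
Hypothesis x_expansive : forall c, nrm c <= nrm (c + s%:C *: mul x c).

Lemma quasi_inverse_comm : mul x r = mul r x.
Proof.
have s0 : s%:C != 0 by rewrite eq_complex negb_and /= gt_eqF.
apply: (scalerI s0); rewrite -(bmulZl hBA) -(bmulZr hBA).
by apply: (addrI (r + y)); rewrite r_quasi_left r_quasi_right.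
Qed.

(* [(1 + r) ^+ k = 1 + gpow k] in the unitization *)
Fixpoint gpow k := if k is k'.+1 then gpow k' + r + mul r (gpow k') else 0.

Lemma gpow_x k : mul (gpow k) x = mul x (gpow k).
Proof.
elim: k => [|k IH] /=; first by rewrite (bmul0l hBA) (bmul0r hBA).
rewrite !(bmulDl hBA) !(bmulDr hBA) -quasi_inverse_comm (bmulA hBA) IH.
by rewrite -!(bmulA hBA) quasi_inverse_comm.
Qed.

Lemma gpow_r k : mul (gpow k) r = mul r (gpow k).
Proof.
elim: k => [|k IH] /=; first by rewrite (bmul0l hBA) (bmul0r hBA).
by rewrite !(bmulDl hBA) !(bmulDr hBA) (bmulA hBA) IH.
Qed.

Definition pow1r k c := c + mul (gpow k) c.

Lemma pow1rS k c : pow1r k.+1 c = pow1r k c + mul r (pow1r k c).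
Proof. by rewrite /pow1r /= !(bmulDl hBA) !(bmulDr hBA) (bmulA hBA) !addrA. Qed.

Lemma quasi_inverse_mul_left z : (z + mul r z) + s%:C *: mul x (z + mul r z) = z.
Proof.
have := congr1 (mul^~ z) r_quasi_left.
rewrite (bmul0l hBA) !(bmulDl hBA) (bmulA hBA) -(bmulZl hBA) => yrz.
by rewrite (bmulDr hBA) -[RHS]addr0 -yrz !addrA.
Qed.

Lemma pow1r_contraction k c : nrm (pow1r k c) <= nrm c.
Proof.
elim: k => [|k IH]; first by rewrite /pow1r /= (bmul0l hBA) addr0.
by rewrite pow1rS; apply: le_trans (x_expansive _) _; rewrite quasi_inverse_mul_left.
Qed.

Fixpoint gsum n := if n is n'.+1 then gsum n' + gpow n'.+1 else 0.

Lemma gsumS n : gsum n.+1 = gsum n + gpow n.+1.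
Proof. by []. Qed.

Lemma gsum_x n : mul (gsum n) x = mul x (gsum n).
Proof.
elim: n => [|n IH]; first by rewrite (bmul0l hBA) (bmul0r hBA).
by rewrite gsumS (bmulDl hBA) (bmulDr hBA) IH gpow_x.
Qed.

(* [csum n c] is [\sum_(1 <= k < n.+1) (1 + r) ^+ k * c] *)
Definition csum n c := n%:R *: c + mul (gsum n) c.

Lemma csumS n c : csum n.+1 c = csum n c + pow1r n.+1 c.
Proof. by rewrite /csum gsumS (bmulDl hBA) /pow1r mulrSr scalerDl scale1r addrACA. Qed.

Lemma csum_le n c : nrm (csum n c) <= n%:R * nrm c.
Proof.
elim: n => [|n IH]; first by rewrite /csum /= scale0r (bmul0l hBA) addr0 nrm0 mul0r.
rewrite csumS mulrSr mulrDl mul1r; apply: le_trans (nrmD _ _) _.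
by rewrite lerD // pow1r_contraction.
Qed.

Lemma csum_telescope n a : s%:C *: mul x (csum n a) = a - pow1r n a.
Proof.
elim: n => [|n IH].
  by rewrite /csum /pow1r /= scale0r !(bmul0l hBA) !addr0 (bmul0r hBA) scaler0 subrr.
rewrite csumS (bmulDr hBA) scalerDr IH pow1rS; set w := pow1r n a.
have -> : s%:C *: mul x (w + mul r w) = w - (w + mul r w).
  by apply: (addIr (w + mul r w)); rewrite subrK addrC quasi_inverse_mul_left.
by rewrite subrKA.
Qed.

Lemma csum_bound n a : nrm (csum n a) <= n%:R * nrm (a - mul x a) + 2 * nrm a / s.
Proof.
have -> : csum n a = csum n (a - mul x a) + mul x (csum n a).
  rewrite /csum (bmulBr hBA) scalerBr (bmulDr hBA) (bmulZr hBA) -(bmulA hBA) gsum_x (bmulA hBA).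
  by rewrite addrACA !subrK.
apply: le_trans (nrmD _ _) _; rewrite lerD ?csum_le // ler_pdivlMr // mulrC.
rewrite -(ger0_norm (ltW s_gt0)) -nrmZr csum_telescope.
by apply: le_trans (nrmD _ _) _; rewrite nrmN mulr2n mulrDl !mul1r lerD ?pow1r_contraction.
Qed.

Definition cesaro n := - ((n.+1%:R : R)^-1)%:C *: gsum n.+1.

Lemma cesaro_sub_mul n c : c - mul (cesaro n) c = ((n.+1%:R : R)^-1)%:C *: csum n.+1 c.
Proof.
rewrite /cesaro /csum (bmulZl hBA) scaleNr opprK scalerDr scalerA.
rewrite -[(n.+1%:R : R[i])](rmorph_nat (real_complex R)) -rmorphM mulVf ?pnatr_eq0 //.
by rewrite scale1r.
Qed.

Lemma cesaro_contraction n c : nrm (c - mul (cesaro n) c) <= nrm c.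
Proof.
rewrite cesaro_sub_mul nrmZr ger0_norm ?invr_ge0 ?ler0n // ler_pdivrMl ?ltr0n //.
exact: csum_le.
Qed.

Lemma cesaro_approx n a :
  nrm (mul (cesaro n) a - a) <= nrm (a - mul x a) + 2 * nrm a / (s * n.+1%:R).
Proof.
rewrite nrmB cesaro_sub_mul nrmZr ger0_norm ?invr_ge0 ?ler0n // ler_pdivrMl ?ltr0n //.
apply: le_trans (csum_bound _ _) _; rewrite mulrDr lerD // invfM.
suff -> : n.+1%:R * (2 * nrm a * (s^-1 / n.+1%:R)) = 2 * nrm a / s by [].
by field; rewrite gt_eqF // addrC natr1 pnatr_eq0.
Qed.

End CesaroMeans.

Arguments cesaro_contraction {R V mul} hBA {x r s}.
Arguments cesaro_approx {R V mul} hBA {x r s}.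

Lemma gpow_rev {R : realType} {V : completeNormedModType R[i]} (mul : V -> V -> V) r k :
  banach_algebra mul -> gpow (mulrev mul) r k = gpow mul r k.
Proof. by move=> hBA; elim: k => [|k IH] //=; rewrite IH /mulrev (gpow_r _ hBA). Qed.

Lemma cesaro_rev {R : realType} {V : completeNormedModType R[i]} (mul : V -> V -> V) r n :
  banach_algebra mul -> cesaro (mulrev mul) r n = cesaro mul r n.
Proof.
move=> hBA; rewrite /cesaro; congr (_ *: _).
by elim: n.+1 => [|k IH] //; rewrite !gsumS IH gpow_rev.
Qed.

Section ApproximateIdentity.
Context {R : realType} {V : completeNormedModType R[i]} {mul : V -> V -> V}.
Hypotheses (hBA : banach_algebra mul) (hau : approx_unital mul).
Local Notation nrm := (@nrm R V).

Lemma FA_approx_of_rA {x K} n : ~ unital mul -> rA mul x -> nrm x <= K ->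
  exists f, [/\ FA mul f, nrm f <= 2,
    forall a, nrm (mul f a - a) <= nrm (a - mul x a) + 4 * (K + 1) * nrm a / n.+1%:R &
    forall a, nrm (mul a f - a) <= nrm (a - mul a x) + 4 * (K + 1) * nrm a / n.+1%:R].
Proof.
move=> nu xrA xK; have K0 : 0 <= K := le_trans (nrm_ge0 x) xK.
pose s := (2 * (K + 1))^-1; have s_gt0 : 0 < s by rewrite invr_gt0; lra.
have y_small : nrm (s%:C *: x) <= 2^-1.
  rewrite nrmZr (ger0_norm (ltW s_gt0)); apply: le_trans (ler_wpM2l (ltW s_gt0) xK) _.
  rewrite mulrC ler_pdivrMr ?mulr_gt0 //; last by lra.
  by rewrite mulrA mulVf // mul1r; lra.
have [r [r_quasi_left r_quasi_right]] := quasi_inverse hBA (s%:C *: x) y_small.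
have x_exp_left := rA_expansive_left hBA nu xrA (ltW s_gt0).
have x_exp_right := rA_expansive_right hBA hau nu xrA (ltW s_gt0).
have err_eq a : 2 * nrm a / (s * n.+1%:R) = 4 * (K + 1) * nrm a / n.+1%:R.
  by rewrite /s; field; rewrite addrC natr1 pnatr_eq0 /=; apply/eqP; lra.
have f_contraction := cesaro_contraction hBA r_quasi_left x_exp_left n.
exists (cesaro mul r n); split.
- rewrite /FA /A1norm; case: pselect => // _.
  apply: unitization_norm_le => c c1; rewrite (bmulNl hBA) scale1r addrC.
  exact: le_trans (f_contraction c) c1.
- apply: (nrm_le_of_mul_ball hau) => c c1.
  have -> : mul (cesaro mul r n) c = c - (c - mul (cesaro mul r n) c).
    by rewrite opprB addrC subrK.
  apply: le_trans (nrmD _ _) _; rewrite nrmN; have := f_contraction c; lra.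
- move=> a; rewrite -err_eq.
  exact: (cesaro_approx hBA s_gt0 r_quasi_left r_quasi_right x_exp_left n a).
(* the right estimate is the left one in the opposite algebra *)
- move=> a; rewrite -err_eq -(cesaro_rev _ _ _ hBA).
  exact: (@cesaro_approx _ _ (mulrev mul) (banach_algebra_rev hBA) x r s s_gt0
           r_quasi_right r_quasi_left x_exp_right n a).
Qed.

Definition pair_le {I : Type} (le : I -> I -> Prop) (p q : I * nat) :=
  le p.1 q.1 /\ (p.2 <= q.2)%N.

Lemma directed_pair_le {I : Type} (le : I -> I -> Prop) :
  directed le -> directed (pair_le le).
Proof.
case=> [[i _] le_refl le_trans le_up]; split.
- by exists (i, 0%N).
- by move=> p; split; [exact: le_refl | exact: leqnn].
- move=> p q w [pq1 pq2] [qw1 qw2].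
  by split; [exact: le_trans pq1 qw1 | exact: leq_trans pq2 qw2].
- move=> p q; have [k [pk qk]] := le_up p.1 q.1.
  by exists (k, maxn p.2 q.2); split; split; rewrite /= ?leq_maxl ?leq_maxr.
Qed.

Lemma eventually_div_lt {B eps : R} : 0 <= B -> 0 < eps ->
  exists N : nat, forall n, (N <= n)%N -> B / n.+1%:R < eps.
Proof.
move=> B0 eps0; exists (Num.Def.archi_bound (B / eps)) => n Nn.
have /lt_le_trans := archi_boundP (divr_ge0 B0 (ltW eps0)).
move=> /(_ n.+1%:R); rewrite ler_nat => /(_ (leqW Nn)).
by rewrite ltr_pdivrMr // ltr_pdivrMr ?ltr0n // mulrC.
Qed.

Lemma net_cvg_pair_le {I : Type} {le : I -> I -> Prop} {w : I -> V} {z : I * nat -> V} {a} B :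
  0 <= B -> (forall p, nrm (z p - a) <= nrm (a - w p.1) + B / p.2.+1%:R) ->
  net_cvg le w a -> net_cvg (pair_le le) z a.
Proof.
move=> B0 z_le w_cvg eps eps0; have eps20 : 0 < eps / 2 by rewrite divr_gt0.
have [t0 wt0] := w_cvg _ eps20; have [n0 Bn0] := eventually_div_lt B0 eps20.
exists (t0, n0) => -[t n] [/= t0t n0n]; apply: le_lt_trans (z_le (t, n)) _.
by rewrite [eps]splitr nrmB ltrD ?wt0 ?Bn0.
Qed.

Lemma FA_net_of_rA_net {I : Type} {le : I -> I -> Prop} {e : I -> V} :
  ~ unital mul -> directed le -> net_bounded e -> (forall t, rA mul (e t)) ->
  exists (J : Type) (le' : J -> J -> Prop) (f : J -> V),
    [/\ directed le', net_bounded f, forall j, FA mul (f j),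
        forall a, net_cvg le (fun t => mul (e t) a) a -> net_cvg le' (fun j => mul (f j) a) a &
        forall a, net_cvg le (fun t => mul a (e t)) a -> net_cvg le' (fun j => mul a (f j)) a].
Proof.
move=> nu dir [K eK] erA.
have [f f_spec] := choice (fun p : I * nat => FA_approx_of_rA p.2 nu (erA p.1) (eK p.1)).
have K0 : 0 <= 4 * (K + 1).
  by have [[t _] _ _ _] := dir; have := le_trans (nrm_ge0 _) (eK t); lra.
exists (I * nat)%type, (pair_le le), f; split.
- exact: directed_pair_le.
- by exists 2 => p; have [] := f_spec p.
- by move=> p; have [] := f_spec p.
- move=> a; apply: (net_cvg_pair_le (4 * (K + 1) * nrm a)).
    by rewrite mulr_ge0 ?nrm_ge0.
  by move=> p; have [_ _ + _] := f_spec p; apply.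
- move=> a; apply: (net_cvg_pair_le (4 * (K + 1) * nrm a)).
    by rewrite mulr_ge0 ?nrm_ge0.
  by move=> p; have [_ _ _] := f_spec p; apply.
Qed.

End ApproximateIdentity.

Section UnitalCase.
Context {R : realType} {V : completeNormedModType R[i]} {mul : V -> V -> V}.

Lemma has_bai_left S : has_bai mul S -> has_left_bai mul S.
Proof. by move=> [I [le [e [? ? ? ? _]]]]; exists I, le, e. Qed.

Lemma has_bai_right S : has_bai mul S -> has_right_bai mul S.
Proof. by move=> [I [le [e [? ? ? _ ?]]]]; exists I, le, e. Qed.

Lemma unital_has_bai_FA : unital mul -> has_bai mul (FA mul).
Proof.
move=> hu; pose u := projT1 (cid hu); have [u_unit u1] : is_unit_of_norm1 mul u := projT2 (cid hu).
have FAu : FA mul u.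
  rewrite /FA /A1norm; case: pselect => [hu'|]; last by [].
  case: (cid hu') => u' [u'_unit _] /=.
  have -> : u' = u by rewrite -[LHS](u_unit u').1 (u'_unit u).2.
  by rewrite scale1r addNr nrm0.
exists unit, (fun _ _ => True), (fun _ => u); split => //.
- by exists 1 => _; rewrite u1.
- by move=> a eps eps0; exists tt => _ _; rewrite (u_unit a).1 subrr nrm0.
- by move=> a eps eps0; exists tt => _ _; rewrite (u_unit a).2 subrr nrm0.
Qed.

End UnitalCase.

Theorem corollary3p9 (R : realType) (V : completeNormedModType R[i])
  (mul : V -> V -> V) (hBA : banach_algebra mul) (hau : approx_unital mul) :
  [/\ has_left_bai mul (rA mul) -> has_left_bai mul (FA mul),
      has_right_bai mul (rA mul) -> has_right_bai mul (FA mul) &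
      has_bai mul (rA mul) -> has_bai mul (FA mul)].
Proof.
have [hu|nu] := pselect (unital mul).
  have bai := unital_has_bai_FA hu.
  by split=> _; [exact: has_bai_left | exact: has_bai_right | exact: bai].
split.
- move=> [I [le [e [dir bd erA e_left]]]].
  have [J [le' [f [dir' bd' fFA f_left _]]]] := FA_net_of_rA_net hBA hau nu dir bd erA.
  by exists J, le', f; split => // a; exact/f_left/e_left.
- move=> [I [le [e [dir bd erA e_right]]]].
  have [J [le' [f [dir' bd' fFA _ f_right]]]] := FA_net_of_rA_net hBA hau nu dir bd erA.
  by exists J, le', f; split => // a; exact/f_right/e_right.
- move=> [I [le [e [dir bd erA e_left e_right]]]].
  have [J [le' [f [dir' bd' fFA f_left f_right]]]] := FA_net_of_rA_net hBA hau nu dir bd erA.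
  by exists J, le', f; split => // a; [exact/f_left/e_left | exact/f_right/e_right].
Qed.
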